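(* Suppose the set $\mathcal P_e$ of PNE of the M-FSIG is nonempty, let $\tilde{\mathbf a}\in\arg\min_{\mathbf a\in\mathcal P_e}W(\mathbf a)$ and let $\mathcal S_{\tilde{\mathbf a}}$ be the set of sharing users in $\tilde{\mathbf a}$. Then \[ \frac{\min_{\mathbf a\in\mathcal P_e}W(\mathbf a)}{\max_{\mathbf a\in\{1,\dots,K\}^N}W(\mathbf a)}\ \ge\ \frac{\sum_{n\in\{1,\dots,N\}\setminus\mathcal S_{\tilde{\mathbf a}}}w_n\log_2\!\big(1+\frac{P_n}{N_0}|h_{n,n,(K-M+1)}|^2\big)}{\sum_{n=1}^N w_n\log_2\!\big(1+\frac{P_n}{N_0}|h_{n,n,(K)}|^2\big)}. \]
   Context: $N$ users, $K$ REs, nonzero complex channel gains $h_{n_1,n_2,k}$, powers $P_n>0$, noise $N_0>0$, weights $w_n>0$. Profiles $\mathbf a\in\{1,\dots,K\}^N$; interference $I_k(\mathbf a_{-n})=\sum_{m'\ne n:\,a_{m'}=k}|h_{m',n,k}|^2P_{m'}$; rate $R_n(\mathbf a)=\log_2\!\big(1+\frac{P_n|h_{n,n,a_n}|^2}{N_0+I_{a_n}(\mathbf a_{-n})}\big)$; $W(\mathbf a)=\sum_n w_nR_n(\mathbf a)$. $|h_{n,n,(j)}|$ is the $j$-th smallest of $|h_{n,n,1}|,\dots,|h_{n,n,K}|$. M-FSIG with integer parameter $1\le M\le K$: utility $u_n(\mathbf a)=\log_2\!\big(1+\frac{P_n|h_{n,n,(K-M+1)}|^2}{N_0+I_{a_n}(\mathbf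 a_{-n})}\big)$ if $|h_{n,n,a_n}|\ge|h_{n,n,(K-M+1)}|$, and $0$ otherwise; PNE are profiles where no user can strictly improve his utility unilaterally. A sharing user is a user $n$ such that $a_{m'}=a_n$ for some $m'\neq n$. *)

From Stdlib Require Import Reals List Arith.
Import ListNotations.
Open Scope R_scope.

(* Users are indexed 0..N-1, resource elements (REs) 0..K-1
   (the paper's 1..N and 1..K shifted by one). *)

(* Complex numbers as pairs (re, im); modulus. *)
Definition cabs (z : R * R) : R := sqrt (fst z ^ 2 + snd z ^ 2).

Definition log2 (x : R) : R := ln x / ln 2.

Definition fsum (n : nat) (f : nat -> R) : R :=
  fold_right (fun i acc => f i + acc) 0 (seq 0 n).

(* j-th smallest (1-based j, 1 <= j <= K) of the values x 0, ..., x (K-1):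
   the minimum of those values v such that #{k < K | x k <= v} >= j. *)
Definition cnt_le (K : nat) (x : nat -> R) (v : R) : nat :=
  length (filter (fun k => if Rle_dec (x k) v then true else false) (seq 0 K)).

Definition ordstat (K : nat) (x : nat -> R) (j : nat) : R :=
  let mx := fold_right (fun k acc => Rmax (x k) acc) (x 0%nat) (seq 0 K) in
  fold_right (fun k acc => Rmin (x k) acc) mx
    (filter (fun k => Nat.leb j (cnt_le K x (x k))) (seq 0 K)).

(* A strategy profile: a n is the RE chosen by user n (for n < N). *)
Definition valid_profile (N K : nat) (a : nat -> nat) : Prop :=
  forall n, (n < N)%nat -> (a n < K)%nat.

Definition upd (a : nat -> nat) (n k : nat) : nat -> nat :=
  fun m => if Nat.eqb m n then k else a m.

(* interference I_k(a_{-n}) at user n on RE k;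
   h m n k is the channel gain from user m to user n on RE k *)
Definition interf (N : nat) (h : nat -> nat -> nat -> R * R) (P : nat -> R)
  (a : nat -> nat) (n k : nat) : R :=
  fsum N (fun m => if andb (negb (Nat.eqb m n)) (Nat.eqb (a m) k)
                   then (cabs (h m n k))^2 * P m else 0).

Definition rate (N : nat) (h : nat -> nat -> nat -> R * R) (P : nat -> R) (N0 : R)
  (a : nat -> nat) (n : nat) : R :=
  log2 (1 + P n * (cabs (h n n (a n)))^2 / (N0 + interf N h P a n (a n))).

Definition welfare (N : nat) (h : nat -> nat -> nat -> R * R) (P w : nat -> R) (N0 : R)
  (a : nat -> nat) : R :=
  fsum N (fun n => w n * rate N h P N0 a n).

Definition hord (K : nat) (h : nat -> nat -> nat -> R * R) (n j : nat) : R :=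
  ordstat K (fun k => cabs (h n n k)) j.

Definition util (N K M : nat) (h : nat -> nat -> nat -> R * R) (P : nat -> R) (N0 : R)
  (a : nat -> nat) (n : nat) : R :=
  if Rle_dec (hord K h n (K - M + 1)) (cabs (h n n (a n)))
  then log2 (1 + P n * (hord K h n (K - M + 1))^2 / (N0 + interf N h P a n (a n)))
  else 0.

Definition is_PNE (N K M : nat) (h : nat -> nat -> nat -> R * R) (P : nat -> R) (N0 : R)
  (a : nat -> nat) : Prop :=
  valid_profile N K a /\
  forall n k, (n < N)%nat -> (k < K)%nat ->
    util N K M h P N0 (upd a n k) n <= util N K M h P N0 a n.

Definition sharing (N : nat) (a : nat -> nat) (n : nat) : bool :=
  existsb (fun m => andb (negb (Nat.eqb m n)) (Nat.eqb (a m) (a n))) (seq 0 N).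

(* In a PNE every user transmits on an RE whose gain is at least the threshold
   |h_{n,n,(K-M+1)}|: the threshold is attained by some RE, deviating to it yields
   a positive utility, so the current utility is positive too, which forces the
   threshold condition.  A user that does not share its RE suffers no
   interference, so its rate is at least log2 (1 + P_n/N0 |h_{n,n,(K-M+1)}|^2);
   sharing users still have a positive rate.  Conversely, in any profile each
   rate is at most the interference-free rate on the best RE.  Comparing the two
   weighted sums gives the bound, for every PNE. *)

From Stdlib Require Import Reals List Arith Lra Lia.
Open Scope R_scope.

Lemma fold_right_sum_le (f g : nat -> R) l :
  (forall i, In i l -> f i <= g i) ->
  fold_right (fun i acc => f i + acc) 0 l <= fold_right (fun i acc => g i + acc) 0 l.
Proof.
  induction l as [|i l IH]; simpl; intros Hfg; [lra|].
  pose proof (Hfg i (or_introl eq_refl)).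
  assert (fold_right (fun i acc => f i + acc) 0 l <= fold_right (fun i acc => g i + acc) 0 l)
    by (apply IH; intros j Hj; apply Hfg; right; exact Hj).
  lra.
Qed.

Lemma fold_right_sum_nonneg (f : nat -> R) l :
  (forall i, In i l -> 0 <= f i) -> 0 <= fold_right (fun i acc => f i + acc) 0 l.
Proof.
  assert (Hzero : fold_right (fun (i : nat) acc => 0 + acc) 0 l = 0)
    by (induction l as [|i l IH]; simpl; [reflexivity | rewrite IH; ring]).
  intros Hf; rewrite <- Hzero at 1.
  apply fold_right_sum_le; exact Hf.
Qed.

Lemma fsum_le N f g : (forall i, (i < N)%nat -> f i <= g i) -> fsum N f <= fsum N g.
Proof.
  intros Hfg; apply fold_right_sum_le; intros i Hi; apply in_seq in Hi; apply Hfg; lia.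
Qed.

Lemma fsum_nonneg N f : (forall i, (i < N)%nat -> 0 <= f i) -> 0 <= fsum N f.
Proof.
  intros Hf; apply fold_right_sum_nonneg; intros i Hi; apply in_seq in Hi; apply Hf; lia.
Qed.

Lemma fsum_eq0 N f : (forall i, (i < N)%nat -> f i = 0) -> fsum N f = 0.
Proof.
  intros Hf; unfold fsum.
  assert (Hl : forall i, In i (seq 0 N) -> f i = 0)
    by (intros i Hi; apply in_seq in Hi; apply Hf; lia).
  induction (seq 0 N) as [|i l IH]; simpl; [reflexivity|].
  rewrite (Hl i (or_introl eq_refl)), IH; [lra | intros j Hj; apply Hl; right; exact Hj].
Qed.

Lemma fsum_pos N f : (1 <= N)%nat -> (forall i, (i < N)%nat -> 0 < f i) -> 0 < fsum N f.
Proof.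
  intros HN Hf; destruct N as [|N]; [lia|]; unfold fsum; simpl.
  assert (0 <= fold_right (fun i acc => f i + acc) 0 (seq 1 N))
    by (apply fold_right_sum_nonneg; intros i Hi; apply in_seq in Hi; apply Rlt_le, Hf; lia).
  pose proof (Hf 0%nat ltac:(lia)); lra.
Qed.

Lemma fold_right_select_attained (op : R -> R -> R) (x : nat -> R) init l :
  (forall u v, op u v = u \/ op u v = v) ->
  fold_right (fun k acc => op (x k) acc) init l = init \/
  exists k, In k l /\ fold_right (fun k acc => op (x k) acc) init l = x k.
Proof.
  intros Hop; induction l as [|k l IH]; simpl; [now left|].
  destruct (Hop (x k) (fold_right (fun k acc => op (x k) acc) init l)) as [E|E];
    rewrite E; [right; exists k; auto|].
  destruct IH as [IH|[k' [Hk' IH]]]; [now left | right; exists k'; auto].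
Qed.

Lemma le_fold_right_Rmax (x : nat -> R) init l k :
  In k l -> x k <= fold_right (fun k acc => Rmax (x k) acc) init l.
Proof.
  induction l as [|k' l IH]; simpl; [tauto|].
  intros [<-|Hk]; [apply Rmax_l|].
  eapply Rle_trans; [apply IH, Hk | apply Rmax_r].
Qed.

Lemma fold_right_Rmin_glb (x : nat -> R) init l v :
  v <= init -> (forall k, In k l -> v <= x k) ->
  v <= fold_right (fun k acc => Rmin (x k) acc) init l.
Proof.
  induction l as [|k l IH]; simpl; intros Hinit Hl; [exact Hinit|].
  apply Rmin_glb; [apply Hl; now left | apply IH; auto].
Qed.

Lemma ordstat_attained K x j :
  (1 <= K)%nat -> exists k, (k < K)%nat /\ ordstat K x j = x k.
Proof.
  intros HK; unfold ordstat; cbv zeta.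
  assert (Hsel : forall op : R -> R -> R, (forall u v, op u v = u \/ op u v = v) ->
            forall init l, (forall k, In k l -> (k < K)%nat) ->
            (exists k, (k < K)%nat /\ init = x k) ->
            exists k, (k < K)%nat /\ fold_right (fun k acc => op (x k) acc) init l = x k).
  { intros op Hop init l Hl Hinit.
    destruct (fold_right_select_attained op x init l Hop) as [E|[k [Hk E]]];
      [rewrite E; exact Hinit | exists k; auto]. }
  assert (Hmin : forall u v, Rmin u v = u \/ Rmin u v = v)
    by (intros u v; apply Rmin_case; auto).
  assert (Hmax : forall u v, Rmax u v = u \/ Rmax u v = v)
    by (intros u v; apply Rmax_case; auto).
  apply Hsel; [exact Hmin | |].
  - intros k Hk; apply filter_In in Hk as [Hk _]; apply in_seq in Hk; lia.
  - apply Hsel; [exact Hmax | intros k Hk; apply in_seq in Hk; lia |].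
    exists 0%nat; split; [lia | reflexivity].
Qed.

(* Every candidate for the K-th smallest value has all K values below it. *)
Lemma le_ordstat_top K x k : (k < K)%nat -> x k <= ordstat K x K.
Proof.
  intros Hk; unfold ordstat; cbv zeta.
  apply fold_right_Rmin_glb; [apply le_fold_right_Rmax, in_seq; lia |].
  intros k' Hk'; apply filter_In in Hk' as [_ Hcnt]; apply Nat.leb_le in Hcnt.
  unfold cnt_le in Hcnt.
  set (below := fun k0 => if Rle_dec (x k0) (x k') then true else false) in Hcnt.
  pose proof (filter_length_le below (seq 0 K)) as Hle; rewrite length_seq in Hle.
  assert (Hall := filter_length_forallb below (seq 0 K) ltac:(rewrite length_seq; lia)).
  rewrite forallb_forall in Hall.
  specialize (Hall k ltac:(apply in_seq; lia)); unfold below in Hall.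
  destruct Rle_dec; [assumption | discriminate].
Qed.

Lemma cabs_pos z : z <> (0, 0) -> 0 < cabs z.
Proof.
  destruct z as [a b]; intros Hz; unfold cabs; simpl; apply sqrt_lt_R0.
  destruct (Req_dec a 0) as [->|Ha]; [|nra].
  destruct (Req_dec b 0) as [->|Hb]; [congruence | nra].
Qed.

Lemma log2_le x y : 0 < x -> x <= y -> log2 x <= log2 y.
Proof.
  intros Hx Hxy; unfold log2, Rdiv; apply Rmult_le_compat_r.
  - apply Rlt_le, Rinv_0_lt_compat; rewrite <- ln_1; apply ln_increasing; lra.
  - destruct Hxy as [Hlt| ->]; [apply Rlt_le, ln_increasing; auto | lra].
Qed.

Lemma log2_gt0 x : 1 < x -> 0 < log2 x.
Proof.
  intros Hx; unfold log2, Rdiv; apply Rmult_lt_0_compat.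
  - rewrite <- ln_1; apply ln_increasing; lra.
  - apply Rinv_0_lt_compat; rewrite <- ln_1; apply ln_increasing; lra.
Qed.

Lemma log2_1p_nonneg x : 0 <= x -> 0 <= log2 (1 + x).
Proof.
  intros Hx; unfold log2, Rdiv; apply Rmult_le_pos.
  - rewrite <- ln_1; destruct Hx as [Hx| <-]; [apply Rlt_le, ln_increasing |
      rewrite Rplus_0_r]; lra.
  - apply Rlt_le, Rinv_0_lt_compat; rewrite <- ln_1; apply ln_increasing; lra.
Qed.

Lemma log2_1p_sinr_gt0 p g I N0 :
  0 < p -> 0 < g -> 0 <= I -> 0 < N0 -> 0 < log2 (1 + p * g ^ 2 / (N0 + I)).
Proof.
  intros Hp Hg HI HN0; apply log2_gt0.
  assert (0 < p * g ^ 2 / (N0 + I))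
    by (apply Rdiv_lt_0_compat; [apply Rmult_lt_0_compat; [|apply pow_lt] | ]; lra).
  lra.
Qed.

Lemma log2_1p_sinr_le p g g' I N0 :
  0 < p -> 0 < g -> g <= g' -> 0 <= I -> 0 < N0 ->
  log2 (1 + p * g ^ 2 / (N0 + I)) <= log2 (1 + p / N0 * g' ^ 2).
Proof.
  intros Hp Hg Hgg' HI HN0.
  assert (Hsinr : 0 < p * g ^ 2 / (N0 + I))
    by (apply Rdiv_lt_0_compat; [apply Rmult_lt_0_compat; [|apply pow_lt] |]; lra).
  apply log2_le; [lra|].
  assert (Hsq : g ^ 2 <= g' ^ 2) by (apply pow_incr; lra).
  assert (p * g ^ 2 / (N0 + I) <= p * g ^ 2 / N0).
  { unfold Rdiv; apply Rmult_le_compat_l;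
      [apply Rmult_le_pos; [lra | apply pow_le; lra] | apply Rinv_le_contravar; lra]. }
  assert (p * g ^ 2 / N0 <= p / N0 * g' ^ 2).
  { replace (p * g ^ 2 / N0) with (p / N0 * g ^ 2) by (field; lra).
    apply Rmult_le_compat_l; [apply Rlt_le, Rdiv_lt_0_compat |]; lra. }
  lra.
Qed.

Lemma Rdiv_le_compat a b c d : 0 <= a -> a <= b -> 0 < c -> c <= d -> a / d <= b / c.
Proof.
  intros Ha Hab Hc Hcd; unfold Rdiv.
  apply Rle_trans with (a * / c).
  - apply Rmult_le_compat_l; [exact Ha | apply Rinv_le_contravar; lra].
  - apply Rmult_le_compat_r; [apply Rlt_le, Rinv_0_lt_compat |]; lra.
Qed.

Lemma upd_eq a n k : upd a n k n = k.
Proof. unfold upd; rewrite Nat.eqb_refl; reflexivity. Qed.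

Lemma interf_not_sharing N h P a n :
  sharing N a n = false -> interf N h P a n (a n) = 0.
Proof.
  intros Hs; apply fsum_eq0; intros m Hm.
  destruct (negb (m =? n)%nat && (a m =? a n)%nat)%bool eqn:Emn; [|reflexivity].
  exfalso; apply Bool.not_true_iff_false in Hs; apply Hs.
  apply existsb_exists; exists m; split; [apply in_seq; lia | exact Emn].
Qed.

Section Game.

Variables (N K M : nat) (h : nat -> nat -> nat -> R * R) (P : nat -> R) (N0 : R).
Hypotheses (Hh : forall n1 n2 k, h n1 n2 k <> (0, 0)) (HP : forall n, 0 < P n) (HN0 : 0 < N0).

Lemma interf_nonneg a n k : 0 <= interf N h P a n k.
Proof.
  apply fsum_nonneg; intros m _; destruct andb; [|lra].
  apply Rmult_le_pos; [apply pow2_ge_0 | apply Rlt_le, HP].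
Qed.

Lemma hord_pos n j : (1 <= K)%nat -> 0 < hord K h n j.
Proof.
  intros HK; destruct (ordstat_attained K (fun k => cabs (h n n k)) j HK) as [k [_ E]].
  unfold hord; rewrite E; apply cabs_pos, Hh.
Qed.

Lemma rate_pos a n : 0 < rate N h P N0 a n.
Proof. apply log2_1p_sinr_gt0; [apply HP | apply cabs_pos, Hh | apply interf_nonneg | exact HN0]. Qed.

Lemma rate_le_best a n :
  (a n < K)%nat -> rate N h P N0 a n <= log2 (1 + P n / N0 * hord K h n K ^ 2).
Proof.
  intros Han; apply log2_1p_sinr_le;
    [apply HP | apply cabs_pos, Hh | | apply interf_nonneg | exact HN0].
  apply (le_ordstat_top K (fun k => cabs (h n n k))), Han.
Qed.

Lemma rate_not_sharing_ge a n t :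
  0 <= t -> t <= cabs (h n n (a n)) -> sharing N a n = false ->
  log2 (1 + P n / N0 * t ^ 2) <= rate N h P N0 a n.
Proof.
  intros Ht Htc Hs; unfold rate; rewrite interf_not_sharing, Rplus_0_r by exact Hs.
  assert (0 <= P n / N0) by (apply Rlt_le, Rdiv_lt_0_compat; [apply HP | exact HN0]).
  assert (t ^ 2 <= cabs (h n n (a n)) ^ 2) by (apply pow_incr; lra).
  apply log2_le; [pose proof (pow2_ge_0 t); nra |].
  replace (P n * cabs (h n n (a n)) ^ 2 / N0) with (P n / N0 * cabs (h n n (a n)) ^ 2)
    by (field; lra).
  nra.
Qed.

(* Deviating to an RE attaining the threshold gives a positive utility, so the
   current utility must be positive as well, i.e. not the junk value 0. *)
Lemma PNE_gain_ge_threshold a n :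
  is_PNE N K M h P N0 a -> (1 <= K)%nat -> (n < N)%nat ->
  hord K h n (K - M + 1) <= cabs (h n n (a n)).
Proof.
  intros [_ Hdev] HK Hn.
  destruct (ordstat_attained K (fun k => cabs (h n n k)) (K - M + 1) HK) as [k0 [Hk0 Hthr]].
  fold (hord K h n (K - M + 1)) in Hthr.
  pose proof (Hdev n k0 Hn Hk0) as Hd; unfold util in Hd; rewrite upd_eq in Hd.
  destruct (Rle_dec (hord K h n (K - M + 1)) (cabs (h n n k0))) as [_|C];
    [|rewrite Hthr in C; lra].
  destruct (Rle_dec (hord K h n (K - M + 1)) (cabs (h n n (a n)))) as [Hle|_]; [exact Hle|].
  exfalso; refine (Rlt_not_le _ _ _ Hd).
  apply log2_1p_sinr_gt0; [apply HP | apply hord_pos, HK | apply interf_nonneg | exact HN0].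
Qed.

Variable w : nat -> R.
Hypothesis Hw : forall n, 0 < w n.

Lemma welfare_pos a : (1 <= N)%nat -> 0 < welfare N h P w N0 a.
Proof.
  intros HN; apply fsum_pos; [exact HN|].
  intros n _; apply Rmult_lt_0_compat; [apply Hw | apply rate_pos].
Qed.

Lemma welfare_le_best a :
  valid_profile N K a ->
  welfare N h P w N0 a <= fsum N (fun n => w n * log2 (1 + P n / N0 * (hord K h n K) ^ 2)).
Proof.
  intros Ha; apply fsum_le; intros n Hn.
  apply Rmult_le_compat_l; [apply Rlt_le, Hw | apply rate_le_best, Ha, Hn].
Qed.

Lemma welfare_PNE_ge a :
  is_PNE N K M h P N0 a -> (1 <= K)%nat ->
  fsum N (fun n => if sharing N a n then 0
                   else w n * log2 (1 + P n / N0 * (hord K h n (K - M + 1)) ^ 2))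
  <= welfare N h P w N0 a.
Proof.
  intros Ha HK; apply fsum_le; intros n Hn.
  pose proof (Hw n) as Hwn; pose proof (rate_pos a n).
  destruct (sharing N a n) eqn:Hs; [nra|].
  apply Rmult_le_compat_l; [lra|]; apply rate_not_sharing_ge;
    [apply Rlt_le, hord_pos, HK | apply PNE_gain_ge_threshold, Hn; assumption | exact Hs].
Qed.

End Game.

Theorem mainTheorem6
  (N K M : nat) (h : nat -> nat -> nat -> R * R) (P w : nat -> R) (N0 : R)
  (HN : (1 <= N)%nat) (HM1 : (1 <= M)%nat) (HMK : (M <= K)%nat)
  (Hh : forall n1 n2 k, h n1 n2 k <> (0, 0))
  (HP : forall n, 0 < P n) (HN0 : 0 < N0) (Hw : forall n, 0 < w n)
  (at_ : nat -> nat)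
  (Hat : is_PNE N K M h P N0 at_)
  (Hatmin : forall a, is_PNE N K M h P N0 a -> welfare N h P w N0 at_ <= welfare N h P w N0 a)
  (astar : nat -> nat)
  (Hastar : valid_profile N K astar)
  (Hastarmax : forall a, valid_profile N K a -> welfare N h P w N0 a <= welfare N h P w N0 astar) :
  welfare N h P w N0 at_ / welfare N h P w N0 astar >=
  fsum N (fun n => if sharing N at_ n then 0
                   else w n * log2 (1 + P n / N0 * (hord K h n (K - M + 1))^2))
  / fsum N (fun n => w n * log2 (1 + P n / N0 * (hord K h n K)^2)).
Proof.
  assert (HK : (1 <= K)%nat) by lia.
  apply Rle_ge, Rdiv_le_compat.
  - apply fsum_nonneg; intros n _; destruct (sharing N at_ n); [lra|].
    apply Rmult_le_pos; [apply Rlt_le, Hw | apply log2_1p_nonneg].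
    apply Rmult_le_pos; [apply Rlt_le, Rdiv_lt_0_compat; auto | apply pow2_ge_0].
  - exact (welfare_PNE_ge N K M h P N0 Hh HP HN0 w Hw at_ Hat HK).
  - exact (welfare_pos N h P N0 Hh HP HN0 w Hw astar HN).
  - exact (welfare_le_best N K h P N0 Hh HP HN0 w Hw astar Hastar).
Qed.
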